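(* For every Bochvar system $\mathbb{B}=\langle\mathbf{B},\mathbf{I}\rangle$, $\mathbb{B}$ is isomorphic to the Bochvar system $\mathbb{B}_{\mathbf{A}_{\mathbb{B}}}$.
   Context: A Bochvar system is a pair $\langle\mathbf{B},\mathbf{I}\rangle$ with $\mathbf{B}$ a Boolean algebra and $I\subseteq B$ containing $1$ and closed under $\wedge$. Bochvar systems $\langle\mathbf{B}_1,\mathbf{I}_1\rangle$ and $\langle\mathbf{B}_2,\mathbf{I}_2\rangle$ are isomorphic if there is a Boolean isomorphism $g:\mathbf{B}_1\to\mathbf{B}_2$ with $g(i)\in I_2$ for all $i\in I_1$. $\mathbf{WK}^e$ is the three-element algebra on $\{0,\tfrac12,1\}$ of type $\langle\wedge,\vee,\neg,J_2,0,1\rangle$. Its operations are: - $\neg$ swaps $0,1$ and fixes $\tfrac12$; - $\wedge,\vee$ are Boolean on $\{0,1\}$ and return $\tfrac12$ if some argument is $\tfrac12$; - $J_2(1)=1$ and $J_2(\tfrac12)=J_2(0)=0$. Bochvar algebras are the members of $ISP(\mathbf{WK}^e)$. Their $\{\wedge,\vee,\neg,0,1\}$-reducts are canonically Płonka sums of Boolean algebras $\mathbf{A}_i$ over a join-semilattice $\langle I,\vee,i_0\rangle$. For a Bochvar system $\mathbb{B}$, $\mathbf{A}_{\mathbb{B}}$ is the unique Bochvar algebra whose $\{\wedge,\vee,\neg,0,1\}$-reduct is the Płonka sum of the following system: - index semilattice $I$ ordered dually to $\mathbf{B}$; - fibres $\mathbf{B}/[i)$, the quotient by the congruence of the principal filter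 $[i)$; - maps $p_{ij}(a/[i))=a/[j)$. For a Bochvar algebra $\mathbf{A}$, $\mathbb{B}_{\mathbf{A}}=\langle\mathbf{A}_{i_0},K\rangle$ with $K=\{J_2(1^{A_i}):i\in I\}$, where $1^{A_i}$ is the top of fibre $\mathbf{A}_i$. *)

From HB Require Import structures.
From mathcomp Require Import all_boot all_order.
Set Implicit Arguments. Unset Strict Implicit. Unset Printing Implicit Defensive.
Import Order.Theory.
Local Open Scope order_scope.

Record bochvar_system d (B : ctbDistrLatticeType d) := BochvarSystem {
  bs_I : {pred B};
  bs_top : \top \in bs_I;
  bs_meet : forall i j, i \in bs_I -> j \in bs_I -> i `&` j \in bs_I
}.

Inductive wk3 := W0 | Wh | W1.

Definition wneg (x : wk3) := match x with W0 => W1 | Wh => Wh | W1 => W0 end.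
Definition wmeet (x y : wk3) :=
  match x, y with
  | Wh, _ | _, Wh => Wh
  | W1, W1 => W1
  | _, _ => W0
  end.
Definition wjoin (x y : wk3) :=
  match x, y with
  | Wh, _ | _, Wh => Wh
  | W0, W0 => W0
  | _, _ => W1
  end.
Definition wJ2 (x : wk3) := match x with W1 => W1 | _ => W0 end.

(** Membership in ISP(WK^e): the algebra <A, m, j, n, J, z, o> of type
    <meet, join, neg, J2, 0, 1> embeds (injective homomorphism) into a
    power WK^e^X. *)
Definition is_bochvar (A : Type) (m jn : A -> A -> A) (n J : A -> A) (z o : A)
  : Prop :=
  exists (X : Type) (h : A -> X -> wk3),
    injective h /\
    (forall x y, h (m x y) = fun t => wmeet (h x t) (h y t)) /\
    (forall x y, h (jn x y) = fun t => wjoin (h x t) (h y t)) /\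
    (forall x, h (n x) = fun t => wneg (h x t)) /\
    (forall x, h (J x) = fun t => wJ2 (h x t)) /\
    h z = (fun _ => W0) /\
    h o = (fun _ => W1).

Section PlonkaSum.
Context {d : Order.disp_t} {B : ctbDistrLatticeType d} (S : bochvar_system B).

(** Carrier of the Płonka sum of the system of S: pairs (i, a) with i in I and
    a a representative of a class of B/[i).  We represent the class a/[i)
    (a = b mod [i) iff a /\ i = b /\ i) by its canonical representative a /\ i,
    i.e. an element below i. *)
Definition ps_carrier := {p : B * B | (p.1 \in bs_I S) && (p.2 <= p.1)}.

Definition ps_idx (x : ps_carrier) : B := (val x).1.
Definition ps_el (x : ps_carrier) : B := (val x).2.

Lemma ps_idx_in (x : ps_carrier) : ps_idx x \in bs_I S.
Proof. by rewrite /ps_idx; case: x => -[i a] /= /andP[]. Qed.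

Lemma mk_ps_proof (k a : B) (Hk : k \in bs_I S) :
  ((k, a `&` k).1 \in bs_I S) && ((k, a `&` k).2 <= (k, a `&` k).1).
Proof. by rewrite /= Hk leIr. Qed.

Definition mk_ps (k a : B) (Hk : k \in bs_I S) : ps_carrier :=
  exist _ (k, a `&` k) (mk_ps_proof a Hk).

Definition ps_join_idx (x y : ps_carrier) : B := ps_idx x `&` ps_idx y.
(* the join in the index semilattice I (ordered dually to B) is the meet of B *)

Lemma ps_join_idx_in x y : ps_join_idx x y \in bs_I S.
Proof. exact: bs_meet (ps_idx_in x) (ps_idx_in y). Qed.

(** Płonka-sum operations: p_{i,k}(x) op p_{j,k}(y) computed in B/[k),
    where k = i v_I j and p_{ik}(a/[i)) = a/[k). *)
Definition ps_meet (x y : ps_carrier) : ps_carrier :=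
  mk_ps (ps_el x `&` ps_el y) (ps_join_idx_in x y).
Definition ps_join (x y : ps_carrier) : ps_carrier :=
  mk_ps (ps_el x `|` ps_el y) (ps_join_idx_in x y).
Definition ps_neg (x : ps_carrier) : ps_carrier :=
  mk_ps (~` ps_el x) (ps_idx_in x).
(* constants live in the fibre of the least index i0 = \top of B *)
Definition ps0 : ps_carrier := mk_ps \bot (bs_top S).
Definition ps1 : ps_carrier := mk_ps \top (bs_top S).

Definition fib_top (i : B) (Hi : i \in bs_I S) : ps_carrier := mk_ps \top Hi.

Definition A_of_is_bochvar (J : ps_carrier -> ps_carrier) : Prop :=
  is_bochvar ps_meet ps_join ps_neg J ps0 ps1.

(** <B, I> is isomorphic to B_{A} = <A_{i0}, K>, K = { J(1^{A_i}) : i in I },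
    where A_{i0} is the fibre over i0 = \top (with the operations of A restricted
    to it): there is a Boolean isomorphism g : B -> A_{i0} with g(I) ⊆ K. *)
Definition iso_to_B_A (J : ps_carrier -> ps_carrier) : Prop :=
  exists g : B -> ps_carrier,
    (forall a, ps_idx (g a) = \top) /\
    injective g /\
    (forall y, ps_idx y = \top -> exists a, g a = y) /\
    (forall a b, g (a `&` b) = ps_meet (g a) (g b)) /\
    (forall a b, g (a `|` b) = ps_join (g a) (g b)) /\
    (forall a, g (~` a) = ps_neg (g a)) /\
    g \bot = ps0 /\ g \top = ps1 /\
    (forall i, i \in bs_I S ->
       exists j (Hj : j \in bs_I S), J (fib_top Hj) = g i).

End PlonkaSum.

From mathcomp Require Import all_boot all_order.
From mathcomp Require Import boolp classical_sets.
Set Implicit Arguments. Unset Strict Implicit. Unset Printing Implicit Defensive.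
Import Order.Theory.
Local Open Scope order_scope.

(* The points of the Stone space of B, i.e. the homomorphisms f : B -> 2, evaluate an
   element (i, a/[i)) of the Płonka sum to 1/2 if f i = 0 and to f a otherwise.  This
   turns the Płonka operations into pointwise WK^e operations, and it is injective
   because such homomorphisms separate the elements of B (ultrafilter theorem); with
   J2 (i, a/[i)) := (1, a/[1)) it is a Bochvar embedding into (WK^e)^X.
   Conversely, for any J2 making the sum a Bochvar algebra, quasi-identities of WK^e
   force J2 (1^{A_i}) = (1, i/[1)), so a |-> a/[1) is the required isomorphism
   B ~ A_{i0}. *)

Section Ultrafilters.
Context {d : Order.disp_t} {B : ctbDistrLatticeType d}.

Definition proper_filter (F : set B) :=
  [/\ forall x y, F x -> F y -> F (x `&` y),
      forall x y, F x -> x <= y -> F y & ~ F \bot].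

Definition ultrafilter (F : set B) := proper_filter F /\ forall x, F x \/ F (~` x).

(* The empty set is admitted so that the empty chain has an upper bound in Zorn's lemma. *)
Definition proper_filter_of (c : B) (F : set B) :=
  proper_filter F /\ ((exists x, F x) -> F c).

Lemma bigcup_proper_filter_of (c : B) (C : set (set B)) :
  (C `<=` proper_filter_of c)%classic -> total_on C subset ->
  proper_filter_of c (\bigcup_(F in C) F)%classic.
Proof.
move=> CP Ctot; split; first split.
- move=> x y [F CF Fx] [G CG Gy].
  have [FG|GF] := Ctot _ _ CF CG.
  + by exists G => //; have [[meetG _ _] _] := CP _ CG; exact: meetG (FG _ Fx) Gy.
  + by exists F => //; have [[meetF _ _] _] := CP _ CF; exact: meetF Fx (GF _ Gy).
- by move=> x y [F CF Fx] xy; exists F => //; have [[_ upF _] _] := CP _ CF; exact: upF xy.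
- by move=> [F CF F0]; have [[_ _ nF0] _] := CP _ CF.
- by move=> [x [F CF Fx]]; exists F => //; apply: (CP _ CF).2; exists x.
Qed.

Definition filter_adjoin (F : set B) (x : B) : set B :=
  fun y => exists2 a, F a & a `&` x <= y.

Lemma sub_filter_adjoin (F : set B) x : (F `<=` filter_adjoin F x)%classic.
Proof. by move=> a Fa; exists a => //; exact: leIl. Qed.

Lemma proper_filter_adjoin (F : set B) x :
  proper_filter F -> ~ F (~` x) -> proper_filter (filter_adjoin F x).
Proof.
move=> [meetF upF _] nFx; split.
- move=> y z [a Fa ay] [b Fb bz]; exists (a `&` b); first exact: meetF.
  by rewrite lexI (le_trans _ ay) ?(le_trans _ bz) // leI2 ?leIl ?leIr.
- by move=> y z [a Fa ay] yz; exists a => //; exact: le_trans yz.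
- move=> [a Fa ax0]; apply: nFx; apply: upF Fa _.
  by rewrite -disj_leC eq_le ax0 le0x.
Qed.

Lemma ultrafilter_exists (c : B) : c != \bot -> exists2 U, ultrafilter U & U c.
Proof.
move=> c0.
have [F [[pF Fc] Fmax]] := Zorn_bigcup (@bigcup_proper_filter_of c).
have {}Fc : F c.
  apply: contrapT => nFc; apply: (Fmax (fun y => c <= y)).
    split=> [x Fx|]; first by case: nFc; apply: Fc; exists x.
    by move=> /(_ c (lexx c)).
  split; first split.
  - by move=> x y cx cy; rewrite lexI cx cy.
  - by move=> x y cx xy; exact: le_trans xy.
  - by rewrite /= lex0 (negbTE c0).
  - by move=> _; exact: lexx.
exists F => //; split=> // x; apply: contrapT => /not_orP[nFx nFnx].
apply: (Fmax (filter_adjoin F x)).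
  split; first exact: sub_filter_adjoin.
  by move=> /(_ x) Fx; apply: nFx; apply: Fx; exists c => //; exact: leIr.
split; first exact: proper_filter_adjoin.
by move=> _; exact: sub_filter_adjoin.
Qed.

End Ultrafilters.

Record bool_hom d (B : ctbDistrLatticeType d) := BoolHom {
  bool_hom_fun :> B -> bool;
  bool_homI : {morph bool_hom_fun : x y / x `&` y >-> x && y};
  bool_homC : {morph bool_hom_fun : x / ~` x >-> ~~ x}
}.

Section BoolHomTheory.
Context {d : Order.disp_t} {B : ctbDistrLatticeType d} (f : bool_hom B).

Lemma bool_hom0 : f \bot = false.
Proof. by rewrite -(meetxC \top) bool_homI bool_homC andbN. Qed.

Lemma bool_hom1 : f \top = true.
Proof. by rewrite -compl0 bool_homC bool_hom0. Qed.

Lemma bool_hom_le {x y} : x <= y -> f x -> f y.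
Proof. by move=> /meet_idPl <-; rewrite bool_homI => /andP[]. Qed.

Lemma bool_homU : {morph f : x y / x `|` y >-> x || y}.
Proof.
by move=> x y; rewrite -[x `|` y]complK complU bool_homC bool_homI !bool_homC negb_and !negbK.
Qed.

End BoolHomTheory.

Section Stone.
Context {d : Order.disp_t} {B : ctbDistrLatticeType d}.

Lemma ultrafilter_bool_hom (U : set B) : ultrafilter U ->
  exists f : bool_hom B, forall x, f x = `[< U x >].
Proof.
move=> [[meetU upU nU0] UC].
have homI : {morph (fun x => `[< U x >]) : x y / x `&` y >-> x && y}.
  move=> x y /=; apply/asboolP/andP => [Uxy|[/asboolP Ux /asboolP Uy]]; last exact: meetU.
  by split; apply/asboolP; [exact: upU Uxy (leIl _ _)|exact: upU Uxy (leIr _ _)].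
have homC : {morph (fun x => `[< U x >]) : x / ~` x >-> ~~ x}.
  move=> x /=; apply/asboolP/asboolPn => [Unx Ux|nUx]; last by case: (UC x).
  by apply: nU0; rewrite -(meetxC x); exact: meetU.
by exists (@BoolHom _ _ _ homI homC).
Qed.

Lemma bool_hom_separates (a b : B) : (forall f : bool_hom B, f a = f b) -> a = b.
Proof.
have sep x y : ~~ (x <= y) -> exists f : bool_hom B, f x && ~~ f y.
  move=> nxy; have : x `&` ~` y != \bot by rewrite disj_leC complK.
  move=> /ultrafilter_exists[U /ultrafilter_bool_hom[f fE] Uxy].
  by exists f; rewrite -bool_homC -bool_homI fE; exact/asboolP.
move=> fab; apply/eqP; rewrite eq_le; apply/andP.
by split; apply: contraT => /sep[f]; rewrite fab andbN.
Qed.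

End Stone.

Definition wk_of (defined value : bool) : wk3 :=
  if defined then (if value then W1 else W0) else Wh.

Lemma wmeet_wk_of (i a j b : bool) : wmeet (wk_of i a) (wk_of j b) = wk_of (i && j) (a && b).
Proof. by case: i a j b => [] [] [] []. Qed.

Lemma wjoin_wk_of (i a j b : bool) : wjoin (wk_of i a) (wk_of j b) = wk_of (i && j) (a || b).
Proof. by case: i a j b => [] [] [] []. Qed.

Lemma wneg_wk_of (i a : bool) : wneg (wk_of i a) = wk_of i (~~ a).
Proof. by case: i a => [] []. Qed.

Lemma wJ2_wk_of (i a : bool) : (a -> i) -> wJ2 (wk_of i a) = wk_of true a.
Proof. by case: i a => [] [] // /(_ isT). Qed.

Section PlonkaSum.
Context {d : Order.disp_t} {B : ctbDistrLatticeType d} (S : bochvar_system B).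

Lemma ps_el_le (x : ps_carrier S) : ps_el x <= ps_idx x.
Proof. by rewrite /ps_el /ps_idx; case: x => -[i a] /= /andP[]. Qed.

Lemma ps_eq (x y : ps_carrier S) : ps_idx x = ps_idx y -> ps_el x = ps_el y -> x = y.
Proof.
case: x y => -[i a] ? [[j b] ?]; rewrite /ps_idx /ps_el /= => ij ab.
by apply: val_inj; rewrite /= ij ab.
Qed.

Lemma ps_idx_mk (k a : B) (Hk : k \in bs_I S) : ps_idx (mk_ps a Hk) = k.
Proof. by []. Qed.

Lemma ps_el_mk (k a : B) (Hk : k \in bs_I S) : ps_el (mk_ps a Hk) = a `&` k.
Proof. by []. Qed.

Lemma ps_join_idxE (x y : ps_carrier S) : ps_join_idx x y = ps_idx x `&` ps_idx y.
Proof. by []. Qed.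

Definition ps_base (a : B) : ps_carrier S := mk_ps a (bs_top S).

Lemma ps_base_inj : injective ps_base.
Proof. by move=> a b /(congr1 (@ps_el _ _ S)); rewrite !ps_el_mk ?meetx1. Qed.

Lemma ps_baseK (y : ps_carrier S) : ps_idx y = \top -> ps_base (ps_el y) = y.
Proof. by move=> y1; apply: ps_eq; rewrite ?(ps_el_mk, ps_idx_mk, ps_join_idxE) ?y1 ?meetx1. Qed.

Lemma ps_baseI a b : ps_base (a `&` b) = ps_meet (ps_base a) (ps_base b).
Proof. by apply: ps_eq; rewrite ?(ps_el_mk, ps_idx_mk, ps_join_idxE) ?meetx1. Qed.

Lemma ps_baseU a b : ps_base (a `|` b) = ps_join (ps_base a) (ps_base b).
Proof. by apply: ps_eq; rewrite ?(ps_el_mk, ps_idx_mk, ps_join_idxE) ?meetx1. Qed.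

Lemma ps_baseC a : ps_base (~` a) = ps_neg (ps_base a).
Proof. by apply: ps_eq; rewrite ?(ps_el_mk, ps_idx_mk, ps_join_idxE) ?meetx1. Qed.

Lemma join_neg_fib_top i (Hi : i \in bs_I S) :
  ps_join (fib_top Hi) (ps_neg (fib_top Hi)) = fib_top Hi.
Proof.
by apply: ps_eq; rewrite ?(ps_el_mk, ps_idx_mk, ps_join_idxE) ?meet1x ?meetCx ?joinx0 ?meetxx.
Qed.

Lemma join_neg_base a : ps_join (ps_base a) (ps_neg (ps_base a)) = ps1 S.
Proof. by apply: ps_eq; rewrite ?(ps_el_mk, ps_idx_mk, ps_join_idxE) ?meetx1 ?joinxC ?meetxx. Qed.

Lemma meet_fib_top_baseC i (Hi : i \in bs_I S) :
  ps_meet (fib_top Hi) (ps_base (~` i)) = ps_neg (fib_top Hi).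
Proof.
apply: ps_eq; rewrite ?(ps_el_mk, ps_idx_mk, ps_join_idxE) ?meetx1 ?meet1x ?meetxx //.
by rewrite meetxC meetCx meet0x.
Qed.

Lemma meet_fib_top_base_le i (Hi : i \in bs_I S) b :
  ps_meet (fib_top Hi) (ps_base b) = fib_top Hi -> i <= b.
Proof.
move=> /(congr1 (@ps_el _ _ S)); rewrite ?ps_el_mk ?ps_idx_mk ?meetx1 meet1x => <-.
by rewrite meetAC leIr.
Qed.

Definition ps_J2 (x : ps_carrier S) : ps_carrier S := ps_base (ps_el x).

Definition ps_eval (x : ps_carrier S) (f : bool_hom B) : wk3 :=
  wk_of (f (ps_idx x)) (f (ps_el x)).

Lemma ps_eval_mk (k a : B) (Hk : k \in bs_I S) f :
  ps_eval (mk_ps a Hk) f = wk_of (f k) (f a).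
Proof. by rewrite /ps_eval /= bool_homI; case: (f k); case: (f a). Qed.

Lemma ps_eval_inj : injective ps_eval.
Proof.
move=> x y exy.
have e (f : bool_hom B) : f (ps_idx x) = f (ps_idx y) /\ f (ps_el x) = f (ps_el y).
  have /implyP := bool_hom_le (f := f) (ps_el_le x).
  have /implyP := bool_hom_le (f := f) (ps_el_le y).
  move: (congr1 (@^~ f) exy); rewrite /ps_eval.
  by case: (f (ps_idx x)); case: (f (ps_idx y)); case: (f (ps_el x)); case: (f (ps_el y)).
by apply: ps_eq; apply: bool_hom_separates => f; case: (e f).
Qed.

Lemma ps_J2_bochvar : A_of_is_bochvar ps_J2.
Proof.
exists (bool_hom B), ps_eval.
split; [exact: ps_eval_inj|split; [|split; [|split; [|split; [|split]]]]].
- by move=> x y; apply: funext => f; rewrite ps_eval_mk !bool_homI wmeet_wk_of.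
- by move=> x y; apply: funext => f; rewrite ps_eval_mk bool_homI bool_homU wjoin_wk_of.
- by move=> x; apply: funext => f; rewrite ps_eval_mk bool_homC wneg_wk_of.
- move=> x; apply: funext => f; rewrite ps_eval_mk bool_hom1 wJ2_wk_of //.
  exact: bool_hom_le (ps_el_le x).
- by apply: funext => f; rewrite ps_eval_mk bool_hom0 bool_hom1.
- by apply: funext => f; rewrite ps_eval_mk bool_hom1.
Qed.

End PlonkaSum.

Section AnyJ2.
Context {d : Order.disp_t} {B : ctbDistrLatticeType d} (S : bochvar_system B).
Variables (J : ps_carrier S -> ps_carrier S) (X : Type) (h : ps_carrier S -> X -> wk3).
Hypotheses (h_inj : injective h)
  (hI : forall x y, h (ps_meet x y) = fun t => wmeet (h x t) (h y t))
  (hU : forall x y, h (ps_join x y) = fun t => wjoin (h x t) (h y t))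
  (hC : forall x, h (ps_neg x) = fun t => wneg (h x t))
  (hJ : forall x, h (J x) = fun t => wJ2 (h x t))
  (h0 : h (ps0 S) = fun _ => W0)
  (h1 : h (ps1 S) = fun _ => W1).

(* The next three lemmas are quasi-identities of WK^e, transferred pointwise along [h]. *)
Lemma ps_idx_J2 x : ps_idx (J x) = \top.
Proof.
have : ps_join (J x) (ps_neg (J x)) = ps1 S.
  by apply: h_inj; apply: funext => t; rewrite hU hC hJ h1; case: (h x t).
by move=> /(congr1 (@ps_idx _ _ S)); rewrite ps_idx_mk ps_join_idxE meetxx.
Qed.

Lemma meet_J2_fixed x : ps_join x (ps_neg x) = x -> ps_meet x (J x) = x.
Proof.
move=> x_fix; apply: h_inj; apply: funext => t; move: (congr1 (h^~ t) x_fix).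
by rewrite hI hU hC hJ; case: (h x t).
Qed.

Lemma meet_J2_disjoint x z :
    ps_join x (ps_neg x) = x -> ps_join z (ps_neg z) = ps1 S ->
    ps_meet x z = ps_neg x ->
  ps_meet (J x) z = ps0 S.
Proof.
move=> x_fix z_bool xz; apply: h_inj; apply: funext => t.
move: (congr1 (h^~ t) x_fix) (congr1 (h^~ t) z_bool) (congr1 (h^~ t) xz).
by rewrite !hI !hU !hC hJ h0 h1; case: (h x t); case: (h z t).
Qed.

Lemma J2_fib_top i (Hi : i \in bs_I S) : J (fib_top Hi) = ps_base S i.
Proof.
set x := fib_top Hi; have x_fix := join_neg_fib_top Hi.
have [b Jx] : exists b, J x = ps_base S b by exists (ps_el (J x)); rewrite ps_baseK ?ps_idx_J2.
rewrite Jx; congr (ps_base S _); apply/eqP; rewrite eq_le; apply/andP; split.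
- have := meet_J2_disjoint x_fix (join_neg_base S (~` i)) (meet_fib_top_baseC Hi).
  rewrite Jx -ps_baseI => /ps_base_inj /eqP.
  by rewrite disj_leC complK.
- by apply: (meet_fib_top_base_le (Hi := Hi)); rewrite -Jx; exact: meet_J2_fixed.
Qed.

Lemma iso_to_B_A_of_embedding : iso_to_B_A J.
Proof.
exists (ps_base S); split; first by [].
split; first exact: ps_base_inj.
split; first by move=> y /ps_baseK; exists (ps_el y).
do 5 (split; first by move=> *; rewrite ?ps_baseI ?ps_baseU ?ps_baseC).
by move=> i Hi; exists i, Hi; exact: J2_fib_top.
Qed.

End AnyJ2.

Theorem theorem3p6 (d : Order.disp_t) (B : ctbDistrLatticeType d)
    (S : bochvar_system B) :
  (exists J : ps_carrier S -> ps_carrier S, A_of_is_bochvar J) /\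
  (forall J : ps_carrier S -> ps_carrier S,
      A_of_is_bochvar J -> iso_to_B_A J).
Proof.
split; first by exists (ps_J2 (S:=S)); exact: ps_J2_bochvar.
move=> J [X [h [h_inj [hI [hU [hC [hJ [h0 h1]]]]]]]].
exact: iso_to_B_A_of_embedding hI hU hC hJ h0 h1.
Qed.
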